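(* Let $G$ be a connected bipartite graph with at least $3$ vertices. Then \[ \mathcal{H}_G=[1,\infty),\qquad [2,\infty)\subset\mathcal{H}^\phi_G\subset[1,\infty),\qquad \{1\}\cup[3,\infty)\subset\mathcal{H}^\psi_G\subset[1,\infty). \] If moreover $K_{2,2}\subset G\subset K_{2,m}$ for some $m\ge2$, then $\mathcal{H}^\phi_G=[2,\infty)$ and $\{1\}\cup[2,\infty)\subset\mathcal{H}^\psi_G\subset[1,\infty)$.
   Context: Graphs are finite and simple; $K_{a,b}$ is the complete bipartite graph, and $\subset$ between graphs means subgraph containment (up to isomorphism). For a graph $G$ on $\{1,\dots,n\}$ and $I\subset\mathbb{R}$, $\mathcal{P}_G(I)$ is the set of real symmetric PSD $n\times n$ matrices with entries in $I$ and $a_{ij}=0$ whenever $i\ne j$ and $(i,j)$ is not an edge; $\mathcal{P}_G=\mathcal{P}_G(\mathbb{R})$. $A^{\circ\alpha}=(a_{ij}^\alpha)$ with $0^\alpha:=0$; $\psi_\alpha(x)=\mathrm{sgn}(x)|x|^\alpha$, $\phi_\alpha(x)=|x|^\alpha$ ($x\ne0$), $\psi_\alpha(0)=\phi_\alpha(0)=0$, applied entrywise. $\mathcal{H}_G=\{\alpha\in\mathbb{R}:A^{\circ\alpha}\in\mathcal{P}_G\ \forall A\in\mathcal{P}_G([0,\infty))\}$, $\mathcal{H}_G^\psi=\{\alpha:\psi_\alpha[A]\in\mathcal{P}_G\ \forall A\in\mathcal{P}_G(\mathbb{R})\}$, $\mathcal{H}_G^\phi=\{\alpha:\phi_\alpha[A]\in\mathcal{P}_G\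 \forall A\in\mathcal{P}_G(\mathbb{R})\}$. *)

From HB Require Import structures.
From mathcomp Require Import all_boot all_order all_algebra.
From mathcomp Require Import all_classical all_reals.
From mathcomp Require Import exp.
Set Implicit Arguments. Unset Strict Implicit. Unset Printing Implicit Defensive.
Import Order.TTheory GRing.Theory Num.Theory.
Local Open Scope ring_scope.
Local Open Scope classical_set_scope.

Definition simple_graph (T : finType) (e : rel T) : Prop :=
  symmetric e /\ irreflexive e.

Definition connected_graph (T : finType) (e : rel T) : Prop :=
  forall x y, connect e x y.

Definition bipartite_graph (T : finType) (e : rel T) : Prop :=
  exists s : T -> bool, forall x y, e x y -> s x != s y.

Definition subgraph (T1 T2 : finType) (e1 : rel T1) (e2 : rel T2) : Prop :=
  exists f : T1 -> T2, injective f /\ forall x y, e1 x y -> e2 (f x) (f y).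

Definition Kab (a b : nat) : rel ('I_a + 'I_b)%type :=
  fun x y => match x, y with
             | inl _, inr _ => true
             | inr _, inl _ => true
             | _, _ => false
             end.

Definition psd (R : realType) (n : nat) (A : 'M[R]_n) : Prop :=
  A^T = A /\ forall v : 'cV[R]_n, 0 <= (v^T *m A *m v) 0 0.

Definition PG (R : realType) (n : nat) (e : rel 'I_n) (I : set R)
    (A : 'M[R]_n) : Prop :=
  psd A /\ (forall i j, I (A i j)) /\
  (forall i j, i != j -> ~~ e i j -> A i j = 0).

Definition epow (R : realType) (alpha : R) (x : R) : R :=
  if x == 0 then 0 else powR x alpha.

Definition phi_pow (R : realType) (alpha : R) (x : R) : R :=
  if x == 0 then 0 else powR `|x| alpha.

Definition psi_pow (R : realType) (alpha : R) (x : R) : R :=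
  if x == 0 then 0 else Num.sg x * powR `|x| alpha.

Definition HG (R : realType) (n : nat) (e : rel 'I_n) : set R :=
  [set alpha | forall A : 'M[R]_n, PG e [set x | 0 <= x] A ->
                 PG e setT (map_mx (epow alpha) A)].

Definition HG_psi (R : realType) (n : nat) (e : rel 'I_n) : set R :=
  [set alpha | forall A : 'M[R]_n, PG e setT A ->
                 PG e setT (map_mx (psi_pow alpha) A)].

Definition HG_phi (R : realType) (n : nat) (e : rel 'I_n) : set R :=
  [set alpha | forall A : 'M[R]_n, PG e setT A ->
                 PG e setT (map_mx (phi_pow alpha) A)].
Arguments Kab a%_N b%_N : clear implicits.

(* Flipping the signs of one colour class
   makes the off-diagonal entries of a nonnegative [A] in [P_G] nonpositive, so
   [f[A]] is PSD as soon as its entries are dominated, diagonal from below and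
   off-diagonal in absolute value, by those of a diagonal rescaling of [A].  For
   [alpha >= 1] the rescaling is [A i i ^ ((alpha - 1) / 2)], thanks to the 2x2
   minors [A i j ^ 2 <= A i i * A j j].  For [alpha >= 2] and entries of any sign,
   one compares instead with [c i j = A i j ^ 2 / (A i i * A j j)]: the neighbours
   of a vertex are pairwise non-adjacent, so a Schur complement bounds every row
   sum of [c] by [1], and the matrix [1 - c] is diagonally dominant.  Exponents
   below [1] (below [2] for [phi]) are excluded by embedding a 3x3 test matrix on
   a path [a - b - c], which every connected graph on three or more vertices
   contains (a signed 4-cycle on a copy of [K_{2,2}]). *)

From HB Require Import structures.
From mathcomp Require Import all_boot all_order all_algebra.
From mathcomp Require Import all_classical all_reals.
From mathcomp Require Import exp.
From mathcomp Require Import ring lra.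
Set Implicit Arguments. Unset Strict Implicit. Unset Printing Implicit Defensive.
Import Order.TTheory GRing.Theory Num.Theory.
Local Open Scope ring_scope.
Local Open Scope classical_set_scope.

Section QuadraticForms.
Variable R : realType.

Definition qf n (A : 'M[R]_n) (w : 'I_n -> R) := \sum_i \sum_j w i * A i j * w j.

Lemma qf_mx n (A : 'M[R]_n) (v : 'cV[R]_n) :
  (v^T *m A *m v) 0 0 = qf A (fun i => v i 0).
Proof.
rewrite mxE /qf; under eq_bigr do rewrite mxE big_distrl /=.
rewrite exchange_big; apply: eq_bigr => i _; apply: eq_bigr => j _.
by rewrite !mxE.
Qed.

Lemma psd_qf n (A : 'M[R]_n) : psd A <-> A^T = A /\ forall w, 0 <= qf A w.
Proof.
split => [[hs hq]|[hs hq]]; split => //; last by move=> v; rewrite qf_mx.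
by move=> w; have := hq (\col_i w i); rewrite qf_mx; under eq_fun do rewrite mxE.
Qed.

Lemma psd_congr m k (P : 'M[R]_(m, k)) (M : 'M[R]_m) : psd M -> psd (P^T *m M *m P).
Proof.
case=> sym pos; split; first by rewrite !trmx_mul trmxK sym mulmxA.
by move=> v; have := pos (P *m v); rewrite trmx_mul !mulmxA.
Qed.

Lemma psd_mxsub k n (q : 'I_k -> 'I_n) (A : 'M[R]_n) : psd A -> psd (mxsub q q A).
Proof.
have -> : mxsub q q A = (colsub q 1%:M)^T *m A *m colsub q 1%:M.
  by rewrite trmx_mxsub trmx1 -rowsubE -mxsub_mul mulmx1.
exact: psd_congr.
Qed.

Lemma binary_form_ge0 (a b c : R) :
  (forall x y, 0 <= x * x * a + 2 * x * y * c + y * y * b) -> 0 <= a /\ c ^+ 2 <= a * b.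
Proof.
move=> H; have a0 : 0 <= a by have := H 1 0; lra.
split => //; case: (ltrgt0P a) a0 => // [ap|az] _.
  have := H (- c) a.
  have -> : - c * - c * a + 2 * - c * a * c + a * a * b = a * (a * b - c ^+ 2) by ring.
  by rewrite pmulr_rge0 // subr_ge0.
rewrite az mul0r; case: (eqVneq c 0) => [->|cn]; first by rewrite expr0n.
have := H (- (b + 1) / (2 * c)) 1.
have -> : - (b + 1) / (2 * c) * (- (b + 1) / (2 * c)) * a
    + 2 * (- (b + 1) / (2 * c)) * 1 * c + 1 * 1 * b = -1 by rewrite az; field.
lra.
Qed.

Lemma psd2_minors (N : 'M[R]_2) : psd N -> 0 <= N 0 0 /\ N 0 1 ^+ 2 <= N 0 0 * N 1 1.
Proof.
move=> /psd_qf[sym pos]; apply: binary_form_ge0 => x y.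
have := pos (fun i => if i == 0 then x else y).
have N10 : N 1 0 = N 0 1 by rewrite -[in LHS]sym mxE.
have e0 : widen_ord (leqnSn 1) ord_max = 0 :> 'I_2 by apply: val_inj.
have e1 : ord_max = 1 :> 'I_2 by apply: val_inj.
rewrite /qf !big_ord_recr !big_ord0 /= e0 e1 N10; lra.
Qed.
End QuadraticForms.

Section PsdEntries.
Variables (R : realType) (n : nat) (A : 'M[R]_n).
Hypothesis hA : psd A.

Lemma psd_entry_sym i j : A j i = A i j.
Proof. by case: hA => sym _; rewrite -[in RHS]sym mxE. Qed.

Lemma psd_diag_ge0 i : 0 <= A i i.
Proof. by have [] := psd2_minors (psd_mxsub (fun _ : 'I_2 => i) hA); rewrite mxE. Qed.

Lemma psd_entry_sqr_le i j : A i j ^+ 2 <= A i i * A j j.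
Proof.
by have [_] := psd2_minors (psd_mxsub (fun a : 'I_2 => if a == 0 then i else j) hA); rewrite !mxE.
Qed.

End PsdEntries.

Section Embedding.
Variables (R : realType) (k n : nat) (p : 'I_k -> 'I_n).
Implicit Types M : 'M[R]_k.

Definition embed_mx (M : 'M[R]_k) : 'M[R]_n := (rowsub p 1%:M)^T *m M *m rowsub p 1%:M.

Lemma embed_mxE M i j :
  embed_mx M i j = \sum_b \sum_a (p a == i)%:R * M a b * (p b == j)%:R.
Proof.
rewrite !mxE; apply: eq_bigr => b _; rewrite !mxE big_distrl.
by under eq_bigr do rewrite !mxE.
Qed.

Lemma psd_embed M : psd M -> psd (embed_mx M).
Proof. exact: psd_congr. Qed.

Lemma embed_mxK M : injective p -> mxsub p p (embed_mx M) = M.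
Proof.
move=> pinj; have subp1 : mxsub p p 1%:M = 1%:M :> 'M[R]_k.
  by apply/matrixP => a b; rewrite !mxE (inj_eq pinj).
by rewrite mxsub_mul -mul_rowsub_mx trmx_mxsub trmx1 -mxsubrc -mxsubcr subp1 mul1mx mulmx1.
Qed.

Lemma embed_not_psd (f : R -> R) M :
  injective p -> ~ psd (map_mx f M) -> ~ psd (map_mx f (embed_mx M)).
Proof. by move=> pinj nM /(psd_mxsub p); rewrite -map_mxsub embed_mxK. Qed.

Lemma embed_mx_ge0 M : (forall a b, 0 <= M a b) -> forall i j, 0 <= embed_mx M i j.
Proof.
move=> M0 i j; rewrite embed_mxE; apply: sumr_ge0 => b _; apply: sumr_ge0 => a _.
by rewrite !mulr_ge0 ?ler0n.
Qed.

Lemma embed_mx_pattern (e : rel 'I_n) M :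
  (forall a b, a != b -> ~~ e (p a) (p b) -> M a b = 0) ->
  forall i j, i != j -> ~~ e i j -> embed_mx M i j = 0.
Proof.
move=> Me i j ij nij; rewrite embed_mxE big1 // => b _; rewrite big1 // => a _.
have [ai|_] := eqVneq (p a) i; last by rewrite !mul0r.
have [bj|_] := eqVneq (p b) j; last by rewrite mulr0.
rewrite Me ?mulr0 ?mul0r ?ai ?bj //.
by apply: contraNneq ij => ab; rewrite -ai -bj ab.
Qed.

End Embedding.

Section OffDiagonal.
Variables (R : realType) (n : nat).
Implicit Types (B : 'M[R]_n) (w x : 'I_n -> R).

Lemma qf_split B w :
  qf B w = \sum_i B i i * w i ^+ 2 + \sum_i \sum_(j | j != i) w i * B i j * w j.
Proof.
rewrite /qf -big_split /=; apply: eq_bigr => i _.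
by rewrite (bigD1 i) //=; congr (_ + _); ring.
Qed.

Lemma qf_ge_diag_sub_abs B w :
  \sum_i B i i * w i ^+ 2 - \sum_i \sum_(j | j != i) `|B i j| * (`|w i| * `|w j|)
  <= qf B w.
Proof.
rewrite qf_split lerD2l -sumrN; apply: ler_sum => i _; rewrite -sumrN.
apply: ler_sum => j _; apply: lerNnormlW.
by rewrite !normrM mulrAC mulrC.
Qed.

Lemma offdiag_sum_swap (F : 'I_n -> 'I_n -> R) :
  \sum_i \sum_(j | j != i) F i j = \sum_i \sum_(j | j != i) F j i.
Proof.
rewrite (exchange_big_dep xpredT) //=; apply: eq_bigr => i _.
by apply: eq_bigl => j; rewrite eq_sym.
Qed.

Lemma offdiag_le_sumsq (c : 'I_n -> 'I_n -> R) x :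
  (forall i j, c i j = c j i) -> (forall i j, 0 <= c i j) ->
  (forall i, \sum_(j | j != i) c i j <= 1) ->
  \sum_i \sum_(j | j != i) c i j * (`|x i| * `|x j|) <= \sum_i x i ^+ 2.
Proof.
move=> c_sym c_ge0 c_row.
have amgm i j : `|x i| * `|x j| <= (x i ^+ 2 + x j ^+ 2) / 2.
  rewrite -(real_normK (num_real (x i))) -(real_normK (num_real (x j))).
  by rewrite ler_pdivlMr //; have := sqr_ge0 (`|x i| - `|x j|); nra.
apply: le_trans (_ : \sum_i \sum_(j | j != i) c i j * ((x i ^+ 2 + x j ^+ 2) / 2) <= _).
  by apply: ler_sum => i _; apply: ler_sum => j _; apply: ler_wpM2l.
have swap : \sum_i \sum_(j | j != i) c i j * x j ^+ 2 =
            \sum_i \sum_(j | j != i) c i j * x i ^+ 2.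
  by rewrite offdiag_sum_swap; apply: eq_bigr => i _; apply: eq_bigr => j _; rewrite c_sym.
have -> : \sum_i \sum_(j | j != i) c i j * ((x i ^+ 2 + x j ^+ 2) / 2) =
          \sum_i \sum_(j | j != i) c i j * x i ^+ 2.
  transitivity ((\sum_i \sum_(j | j != i) c i j * x i ^+ 2 +
                 \sum_i \sum_(j | j != i) c i j * x j ^+ 2) / 2); last by rewrite swap; field.
  rewrite -big_split big_distrl; apply: eq_bigr => i _ /=.
  by rewrite -big_split big_distrl; apply: eq_bigr => j _ /=; ring.
apply: ler_sum => i _; rewrite -big_distrl /= -[leRHS]mul1r.
by apply: ler_wpM2r; [exact: sqr_ge0 | exact: c_row].
Qed.

End OffDiagonal.

Section Bipartite.
Variables (R : realType) (n : nat) (s : 'I_n -> bool).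
Implicit Types (A B : 'M[R]_n).

Definition bipartite_mx A := forall i j, i != j -> s i = s j -> A i j = 0.

Lemma bipartite_mx_side A i j : bipartite_mx A -> i != j -> A i j != 0 -> s i != s j.
Proof. by move=> hA ij; apply: contraNneq => /(hA _ _ ij) ->. Qed.

Lemma qf_sign_flip A x : bipartite_mx A ->
  qf A (fun i => (-1) ^+ s i * x i) =
  \sum_i A i i * x i ^+ 2 - \sum_i \sum_(j | j != i) A i j * (x i * x j).
Proof.
move=> hA; rewrite qf_split -sumrN; congr (_ + _).
  by apply: eq_bigr => i _; rewrite exprMn sqrr_sign mul1r.
apply: eq_bigr => i _; rewrite -sumrN; apply: eq_bigr => j ji.
have [->|Aij] := eqVneq (A i j) 0; first by rewrite !(mulr0, mul0r) oppr0.
have ij : i != j by rewrite eq_sym.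
have sij : (-1) ^+ s i * (-1) ^+ s j = -1 :> R.
  by move: (bipartite_mx_side hA ij Aij); rewrite -signr_addb; case: (s i); case: (s j).
move: sij; set a := (-1) ^+ s i; set b := (-1) ^+ s j => sij.
by transitivity (a * b * (A i j * (x i * x j))); [ring | rewrite sij mulN1r].
Qed.

Lemma bipartite_psd_dominated A B (p : 'I_n -> R) :
  psd A -> bipartite_mx A -> B^T = B ->
  (forall i, A i i * p i ^+ 2 <= B i i) ->
  (forall i j, i != j -> `|B i j| <= A i j * (p i * p j)) -> psd B.
Proof.
move=> hA hAs Bsym hdiag hoff; apply/psd_qf; split => // w.
apply: le_trans (qf_ge_diag_sub_abs B w).
have [_ /(_ (fun i => (-1) ^+ s i * (p i * `|w i|)))] := (psd_qf A).1 hA.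
rewrite qf_sign_flip // => /le_trans; apply; apply: lerB.
  apply: ler_sum => i _; rewrite exprMn real_normK ?num_real // mulrA.
  by apply: ler_wpM2r; [exact: sqr_ge0 | exact: hdiag].
apply: ler_sum => i _; apply: ler_sum => j ji.
rewrite [in leRHS]mulrACA [leRHS]mulrA; apply: ler_wpM2r; first by rewrite mulr_ge0.
by apply: hoff; rewrite eq_sym.
Qed.

(* The test vector [v] is chosen so that [(A v) k = 0] for every [k != i]: the
   neighbours of [i] all lie on the other side and are pairwise non-adjacent. *)
Lemma bipartite_row_bound A i : psd A -> bipartite_mx A ->
  \sum_(j | j != i) A i j ^+ 2 / A j j <= A i i.
Proof.
move=> hA hAs; pose v k := if k == i then 1 else - (A i k / A k k).
have Av0 k : k != i -> v k * \sum_l A k l * v l = 0.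
  move=> ki; rewrite /v (negbTE ki).
  have [->|Aik] := eqVneq (A i k) 0; first by rewrite mul0r oppr0 mul0r.
  have Akk : A k k != 0.
    apply: contraNneq Aik => Akk0; rewrite -sqrf_eq0 eq_le sqr_ge0 andbT.
    by have := psd_entry_sqr_le hA i k; rewrite Akk0 mulr0.
  suff -> : \sum_l A k l * v l = 0 by rewrite mulr0.
  rewrite (bigD1 i) //= /v eqxx mulr1 (bigD1 k) //= (negbTE ki) big1 ?addr0.
    by rewrite (psd_entry_sym hA k i) mulrN mulrCA mulfV // mulr1 subrr.
  move=> l /andP [li lk]; rewrite (negbTE li).
  have [->|Ail] := eqVneq (A i l) 0; first by rewrite mul0r oppr0 mulr0.
  suff -> : A k l = 0 by rewrite mul0r.
  have sk : s i != s k by apply: (bipartite_mx_side hAs) => //; rewrite eq_sym.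
  have sl : s i != s l by apply: (bipartite_mx_side hAs) => //; rewrite eq_sym.
  apply: (hAs); first by rewrite eq_sym.
  by move: sk sl; case: (s i); case: (s k); case: (s l).
have [_ /(_ v)] := (psd_qf A).1 hA.
have -> : qf A v = \sum_k v k * \sum_l A k l * v l.
  by apply: eq_bigr => k _; rewrite big_distrr; apply: eq_bigr => l _; exact/esym/mulrA.
rewrite (bigD1 i) //= [X in _ + X]big1 ?addr0; last exact: Av0.
rewrite (bigD1 i) //=.
have -> : \sum_(l | l != i) A i l * v l = - \sum_(j | j != i) A i j ^+ 2 / A j j.
  by rewrite -sumrN; apply: eq_bigr => l li; rewrite /v (negbTE li) mulrN expr2 mulrA.
by rewrite /v eqxx mul1r mulr1 subr_ge0.
Qed.

Lemma bipartite_psd_dominated_corr A B (u : 'I_n -> R) :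
  psd A -> bipartite_mx A -> B^T = B ->
  (forall i, B i i = u i ^+ 2) ->
  (forall i j, i != j -> `|B i j| <= A i j ^+ 2 / (A i i * A j j) * (u i * u j)) ->
  psd B.
Proof.
move=> hA hAs Bsym hdiag hoff; apply/psd_qf; split => // w.
pose c i j := A i j ^+ 2 / (A i i * A j j).
have c_ge0 i j : 0 <= c i j by rewrite divr_ge0 ?sqr_ge0 ?mulr_ge0 ?psd_diag_ge0.
have c_sym i j : c i j = c j i by rewrite /c (psd_entry_sym hA i j) [A j j * _]mulrC.
have c_row i : \sum_(j | j != i) c i j <= 1.
  have -> : \sum_(j | j != i) c i j = (\sum_(j | j != i) A i j ^+ 2 / A j j) / A i i.
    by rewrite big_distrl; apply: eq_bigr => j _; rewrite /c invfM [_^-1 * _]mulrC mulrA.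
  have [->|Aii] := eqVneq (A i i) 0; first by rewrite invr0 mulr0.
  rewrite ler_pdivrMr ?mul1r ?bipartite_row_bound //.
  by rewrite lt_neqAle eq_sym Aii psd_diag_ge0.
pose x i := u i * w i.
apply: le_trans (qf_ge_diag_sub_abs B w); rewrite subr_ge0.
have -> : \sum_i B i i * w i ^+ 2 = \sum_i x i ^+ 2.
  by apply: eq_bigr => i _; rewrite hdiag exprMn.
apply: le_trans (offdiag_le_sumsq x c_sym c_ge0 c_row).
apply: ler_sum => i _; apply: ler_sum => j ji.
have hB : `|B i j| <= c i j * (`|u i| * `|u j|).
  apply: le_trans (hoff i j _) _; first by rewrite eq_sym.
  by rewrite -normrM; apply: ler_wpM2l; [exact: c_ge0 | exact: ler_norm].
apply: le_trans (ler_wpM2r (mulr_ge0 (normr_ge0 (w i)) (normr_ge0 (w j))) hB) _.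
by rewrite /x !normrM le_eqVlt; apply/orP; left; apply/eqP; ring.
Qed.

End Bipartite.

Section RealPowers.
Variable R : realType.
Implicit Types x y z b : R.

Lemma gt1_ltr_powR x y z : 1 < x -> y < z -> powR x y < powR x z.
Proof.
move=> x1 yz; rewrite /powR gt_eqF ?(lt_trans ltr01) // ltr_expR.
by rewrite ltr_pM2r // ln_gt0.
Qed.

Lemma powR_half_sqr x z : powR x (z / 2) ^+ 2 = powR x z.
Proof. by rewrite -powR_mulrn ?powR_ge0 // -powRrM divfK ?pnatr_eq0. Qed.

Lemma powR_sqr_half x z : 0 <= x -> powR x z = powR (x ^+ 2) (z / 2).
Proof. by move=> x0; rewrite -powR_mulrn // -powRrM mulrC divfK ?pnatr_eq0. Qed.

Lemma powR_le_mul_powRB1 x y b : 0 <= x <= y -> 1 <= b -> powR x b <= x * powR y (b - 1).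
Proof.
move=> /andP[x0 xy] b1; rewrite -mulr_powRB1 ?(lt_le_trans ltr01 b1) //.
by apply: ler_wpM2l => //; apply: ge0_ler_powR; rewrite ?nnegrE ?subr_ge0 ?(le_trans x0).
Qed.

End RealPowers.

Section EntrywisePowers.
Variables (R : realType) (n : nat) (s : 'I_n -> bool).
Implicit Types (alpha : R) (A : 'M[R]_n).

Lemma map_mx_sym (f : R -> R) A : A^T = A -> (map_mx f A)^T = map_mx f A.
Proof. by move=> sym; apply/matrixP => i j; rewrite !mxE -[in RHS]sym mxE. Qed.

Lemma psd_epow alpha A : 1 <= alpha -> psd A -> bipartite_mx s A ->
  (forall i j, 0 <= A i j) -> psd (map_mx (epow alpha) A).
Proof.
move=> a1 hA hAs A_ge0.
apply: (bipartite_psd_dominated (p := fun i => powR (A i i) ((alpha - 1) / 2)) hA hAs).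
- by apply: map_mx_sym; case: hA.
- move=> i; rewrite mxE /epow powR_half_sqr; case: eqVneq => [->|_]; first by rewrite mul0r.
  by rewrite mulr_powRB1 ?psd_diag_ge0 ?(lt_le_trans ltr01 a1).
move=> i j ij; rewrite mxE /epow; case: eqVneq => [->|_]; first by rewrite normr0 mul0r.
rewrite ger0_norm ?powR_ge0 // -powRM ?psd_diag_ge0 //.
rewrite -(mulr_powRB1 (A_ge0 i j)) ?(lt_le_trans ltr01 a1) //.
apply: ler_wpM2l => //; rewrite (powR_sqr_half _ (A_ge0 i j)).
apply: ge0_ler_powR; rewrite ?nnegrE ?sqr_ge0 ?mulr_ge0 ?psd_diag_ge0 ?psd_entry_sqr_le //.
all: by rewrite ?subr_ge0 ?invr_ge0.
Qed.

Lemma psd_map_powR_ge2 alpha (f : R -> R) A : 2 <= alpha ->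
  f 0 = 0 -> (forall x, 0 < x -> f x = powR x alpha) ->
  (forall x, `|f x| <= powR `|x| alpha) ->
  psd A -> bipartite_mx s A -> psd (map_mx f A).
Proof.
move=> a2 f0 f_gt0 f_abs hA hAs.
have a0 : alpha != 0 by rewrite gt_eqF // (lt_le_trans _ a2).
apply: (bipartite_psd_dominated_corr (u := fun i => powR (A i i) (alpha / 2)) hA hAs).
- by apply: map_mx_sym; case: hA.
- move=> i; rewrite mxE powR_half_sqr; have [->|Aii] := eqVneq (A i i) 0.
    by rewrite f0 powR0.
  by rewrite f_gt0 // lt_neqAle eq_sym Aii psd_diag_ge0.
move=> i j ij; rewrite mxE -powRM ?psd_diag_ge0 //; apply: le_trans (f_abs _) _.
have [->|Aij] := eqVneq (A i j) 0.
  by rewrite normr0 powR0 // expr0n /= !mul0r.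
have Aij2 := psd_entry_sqr_le hA i j.
have D_gt0 : 0 < A i i * A j j.
  by apply: lt_le_trans Aij2; rewrite lt_neqAle eq_sym sqrf_eq0 Aij sqr_ge0.
rewrite (powR_sqr_half _ (normr_ge0 _)) real_normK ?num_real //.
rewrite -[X in _ <= _ * X](mulr_powRB1 (ltW D_gt0)); last by lra.
rewrite mulrA divfK ?gt_eqF //; apply: powR_le_mul_powRB1; last by lra.
by rewrite sqr_ge0 Aij2.
Qed.

End EntrywisePowers.

Section TestMatrices.
Variable R : realType.

Definition path3_mx : 'M[R]_3 :=
  \matrix_(i, j) nth 0 (nth [::] [:: [:: 1; 1; 0]; [:: 1; 2; 1]; [:: 0; 1; 1]] i) j.

Lemma path3_mx_psd : psd path3_mx.
Proof.
apply/psd_qf; split.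
  by apply/matrixP => i j; rewrite !mxE; case: i => [[|[|[|i]]] hi]; case: j => [[|[|[|j]]] hj].
move=> w; rewrite /qf !big_ord_recr !big_ord0 /= !mxE /=.
set x := w _; set y := w _; set z := w _.
have := sqr_ge0 (x + y); have := sqr_ge0 (y + z); nra.
Qed.

(* [map_mx f path3_mx] has determinant [f 2 - 2]. *)
Lemma path3_mx_map_not_psd (f : R -> R) :
  f 0 = 0 -> f 1 = 1 -> 0 < f 2 < 2 -> ~ psd (map_mx f path3_mx).
Proof.
move=> f0 f1 /andP[t0 t2] /psd_qf[_ /(_ (fun a => if val a == 1%N then -2 else f 2))].
rewrite /qf !big_ord_recr !big_ord0 /= !mxE /= f0 f1; nra.
Qed.

(* The off-diagonal signs multiply to [-1], which keeps [cycle4_mx] PSD with a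
   diagonal of only [sqrt 2]; once [f] sends them all to [1], the vector
   [(1, 1, -1, -1)] forces a diagonal of at least [2]. *)
Definition cycle4_mx : 'M[R]_4 := let r := Num.sqrt 2 in
  \matrix_(i, j) nth 0 (nth [::]
    [:: [:: r; 0; 1; 1]; [:: 0; r; 1; -1]; [:: 1; 1; r; 0]; [:: 1; -1; 0; r]] i) j.

Lemma cycle4_mx_psd : psd cycle4_mx.
Proof.
apply/psd_qf; split.
  by apply/matrixP => i j; rewrite !mxE; case: i => [[|[|[|[|i]]]] hi]; case: j => [[|[|[|[|j]]]] hj].
move=> w; rewrite /qf !big_ord_recr !big_ord0 /= !mxE /=.
set x1 := w _; set x2 := w _; set y1 := w _; set y2 := w _; set r := Num.sqrt 2.
have r2 : r ^+ 2 = 2 by rewrite sqr_sqrtr.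
have r0 : 0 < r by rewrite sqrtr_gt0.
set Q := (X in 0 <= X).
have E : r * Q = (r * x1 + y1 + y2) ^+ 2 + (r * x2 + y1 - y2) ^+ 2
                 + (r ^+ 2 - 2) * (y1 ^+ 2 + y2 ^+ 2) by rewrite /Q; ring.
rewrite r2 subrr mul0r addr0 in E.
by rewrite -(pmulr_rge0 _ r0) E addr_ge0 ?sqr_ge0.
Qed.

Lemma cycle4_mx_map_not_psd (f : R -> R) :
  f 0 = 0 -> f 1 = 1 -> f (-1) = 1 -> f (Num.sqrt 2) < 2 -> ~ psd (map_mx f cycle4_mx).
Proof.
move=> f0 f1 fN1 fr /psd_qf[_ /(_ (fun a => if (val a < 2)%N then 1 else -1))].
rewrite /qf !big_ord_recr !big_ord0 /= !mxE /= f0 f1 fN1; lra.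
Qed.

End TestMatrices.

Section GraphObstructions.
Variables (R : realType) (n : nat) (e : rel 'I_n).
Hypothesis e_simple : simple_graph e.

Lemma path3_obstruction (f : R -> R) a b c : e a b -> e b c -> a != c ->
  f 0 = 0 -> f 1 = 1 -> 0 < f 2 < 2 ->
  exists2 A : 'M[R]_n, PG e [set x | 0 <= x] A & ~ psd (map_mx f A).
Proof.
case: e_simple => e_sym e_irr eab ebc ac f0 f1 f2.
have ab : a != b by apply: contraTneq eab => ->; rewrite e_irr.
have bc : b != c by apply: contraTneq ebc => ->; rewrite e_irr.
pose p := tnth [tuple a; b; c].
have pinj : injective p by apply/tuple_uniqP; rewrite /= !inE negb_or ab ac bc.
exists (embed_mx p (path3_mx R)); last first.
  exact: embed_not_psd pinj (path3_mx_map_not_psd f0 f1 f2).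
split; first exact/psd_embed/path3_mx_psd.
split.
  by apply: embed_mx_ge0 => -[[|[|[|x]]] hx] [[|[|[|y]]] hy]; rewrite mxE //= ?ler01 ?ler0n.
apply: embed_mx_pattern => -[[|[|[|x]]] hx] [[|[|[|y]]] hy] //=; rewrite mxE /p !(tnth_nth a) /=.
all: by rewrite ?eab ?ebc // e_sym ?eab ?ebc.
Qed.

Lemma cycle4_obstruction (f : R -> R) : subgraph (Kab 2 2) e ->
  f 0 = 0 -> f 1 = 1 -> f (-1) = 1 -> f (Num.sqrt 2) < 2 ->
  exists2 A : 'M[R]_n, PG e setT A & ~ psd (map_mx f A).
Proof.
move=> [g [ginj g_edge]] f0 f1 fN1 fr.
pose t : 4.-tuple ('I_2 + 'I_2) := [tuple inl ord0; inl ord_max; inr ord0; inr ord_max].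
pose p := g \o tnth t.
have pinj : injective p by apply: inj_comp => //; apply/tuple_uniqP.
exists (embed_mx p (cycle4_mx R)); last first.
  exact: embed_not_psd pinj (cycle4_mx_map_not_psd f0 f1 fN1 fr).
split; first exact/psd_embed/cycle4_mx_psd.
split => //; apply: embed_mx_pattern => -[[|[|[|[|x]]]] hx] [[|[|[|[|y]]]] hy] //=.
all: move=> _ nE; rewrite mxE //=; case/negP: nE; exact: g_edge.
Qed.

End GraphObstructions.

(* If no vertex had two distinct neighbours, the component of a vertex would
   consist of at most the vertex and one neighbour. *)
Lemma connected_path3 n (e : rel 'I_n) : simple_graph e -> connected_graph e ->
  (3 <= n)%N -> exists a b c, [/\ e a b, e b c & a != c].
Proof.
move=> [e_sym _] e_conn n3.
pose x0 : 'I_n := Ordinal (leq_trans (isT : (0 < 3)%N) n3).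
pose x1 : 'I_n := Ordinal (leq_trans (isT : (1 < 3)%N) n3).
have [y ey] : exists y, e x0 y.
  case/connectP: (e_conn x0 x1) => -[|y q] /=; first by move=> _ /(congr1 val).
  by case/andP => ey _ _; exists y.
case: (pickP (fun z => e y z && (z != x0))) => [z /andP[eyz zx]|no_y].
  by exists x0, y, z; rewrite eq_sym.
case: (pickP (fun z => e x0 z && (z != y))) => [z /andP[exz zy]|no_x0].
  by exists y, x0, z; rewrite e_sym eq_sym.
have closedS : closed e (pred2 x0 y).
  apply: intro_closed => [u v|u v euv]; first by rewrite !e_conn.
  rewrite !inE => /orP[/eqP eu|/eqP eu]; subst u.
    by apply/contraT; rewrite negb_or => /andP[_ vy]; have := no_x0 v; rewrite euv vy.
  by apply/contraT; rewrite negb_or => /andP[vx _]; have := no_y v; rewrite euv vx.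
have : (0 < #|[predC pred2 x0 y]|)%N.
  rewrite -(ltn_add2l #|pred2 x0 y|) addn0 cardC card2 card_ord.
  by apply: leq_trans (n3); case: (x0 != y).
case/card_gt0P => z; rewrite inE => zS.
by move: (closed_connect closedS (e_conn x0 z)); rewrite (negbTE zS) !inE eqxx.
Qed.

Section PowerMaps.
Variable R : realType.
Implicit Types alpha x : R.

Lemma epow0 alpha : epow alpha 0 = 0. Proof. by rewrite /epow eqxx. Qed.

Lemma epow_gt0 alpha x : 0 < x -> epow alpha x = powR x alpha.
Proof. by move=> x0; rewrite /epow gt_eqF. Qed.

Lemma phi_pow0 alpha : phi_pow alpha 0 = 0. Proof. by rewrite /phi_pow eqxx. Qed.

Lemma phi_pow_gt0 alpha x : 0 < x -> phi_pow alpha x = powR x alpha.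
Proof. by move=> x0; rewrite /phi_pow gt_eqF // gtr0_norm. Qed.

Lemma phi_powN1 alpha : phi_pow alpha (-1) = 1.
Proof. by rewrite /phi_pow oppr_eq0 oner_eq0 normrN normr1 powR1. Qed.

Lemma phi_pow_abs alpha x : `|phi_pow alpha x| <= powR `|x| alpha.
Proof.
rewrite /phi_pow; case: eqVneq => [_|_]; first by rewrite normr0 powR_ge0.
by rewrite ger0_norm ?powR_ge0.
Qed.

Lemma psi_pow0 alpha : psi_pow alpha 0 = 0. Proof. by rewrite /psi_pow eqxx. Qed.

Lemma psi_pow_gt0 alpha x : 0 < x -> psi_pow alpha x = powR x alpha.
Proof. by move=> x0; rewrite /psi_pow gt_eqF // gtr0_sg // mul1r gtr0_norm. Qed.

Lemma psi_pow_abs alpha x : `|psi_pow alpha x| <= powR `|x| alpha.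
Proof.
rewrite /psi_pow; case: eqVneq => [_|x0]; first by rewrite normr0 powR_ge0.
by rewrite normrM normr_sg x0 mul1r ger0_norm ?powR_ge0.
Qed.

Lemma psi_pow1 x : psi_pow 1 x = x.
Proof. by rewrite /psi_pow; case: eqVneq => [->|_] //; rewrite powRr1 // -numEsg. Qed.

End PowerMaps.

Section ExponentSets.
Variables (R : realType) (n : nat) (e : rel 'I_n).
Implicit Types (A : 'M[R]_n) (f : R -> R).

Lemma PG_map (I : set R) f A :
  f 0 = 0 -> PG e I A -> psd (map_mx f A) -> PG e setT (map_mx f A).
Proof. by move=> f0 [_ [_ hz]] hf; split => //; split => // i j ij nij; rewrite mxE hz. Qed.

Lemma PG_bipartite_mx (s : 'I_n -> bool) (I : set R) A :
  (forall x y, e x y -> s x != s y) -> PG e I A -> bipartite_mx s A.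
Proof.
move=> hs [_ [_ hz]] i j ij sij; apply: hz => //.
by apply/negP => /hs; rewrite sij eqxx.
Qed.

Lemma PG_nneg_setT A : PG e [set x | 0 <= x] A -> PG e setT A.
Proof. by case=> hA [_ hz]. Qed.

Section BipartiteGraph.
Variable s : 'I_n -> bool.
Hypothesis e_bip : forall x y, e x y -> s x != s y.

Lemma HG_ge1 : [set x : R | 1 <= x] `<=` HG e.
Proof.
move=> alpha a1; rewrite /HG /= => A hA; apply: PG_map (epow0 _) (hA) _.
by case: (hA) => hpsd [hge0 _]; apply: psd_epow a1 hpsd (PG_bipartite_mx e_bip hA) hge0.
Qed.

Lemma psd_map_PG_ge2 alpha f A : 2 <= alpha -> f 0 = 0 ->
  (forall x, 0 < x -> f x = powR x alpha) -> (forall x, `|f x| <= powR `|x| alpha) ->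
  PG e setT A -> PG e setT (map_mx f A).
Proof.
move=> a2 f0 f_gt0 f_abs hA; apply: PG_map (f0) (hA) _.
by case: (hA) => hpsd _; apply: psd_map_powR_ge2 a2 f0 f_gt0 f_abs hpsd (PG_bipartite_mx e_bip hA).
Qed.

Lemma HG_phi_ge2 : [set x : R | 2 <= x] `<=` HG_phi e.
Proof. by move=> alpha a2; rewrite /HG_phi /= => A; apply: psd_map_PG_ge2 (phi_pow0 _) (@phi_pow_gt0 _ _) (@phi_pow_abs _ _). Qed.

Lemma HG_psi_ge2 : [set x : R | 2 <= x] `<=` HG_psi e.
Proof. by move=> alpha a2; rewrite /HG_psi /= => A; apply: psd_map_PG_ge2 (psi_pow0 _) (@psi_pow_gt0 _ _) (@psi_pow_abs _ _). Qed.

End BipartiteGraph.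

Lemma HG_psi1 : HG_psi e (1 : R).
Proof. by rewrite /HG_psi /= => A; rewrite (_ : map_mx _ A = A) //; apply/matrixP => i j; rewrite mxE psi_pow1. Qed.

Section Connected.
Hypotheses (e_simple : simple_graph e) (e_conn : connected_graph e) (n3 : (3 <= n)%N).

Lemma ge1_of_preserving alpha f : f 0 = 0 -> (forall x, 0 < x -> f x = powR x alpha) ->
  (forall A, PG e [set x | 0 <= x] A -> psd (map_mx f A)) -> 1 <= alpha.
Proof.
move=> f0 f_gt0 f_psd; rewrite leNgt; apply/negP => a1.
have [a [b [c [eab ebc ac]]]] := connected_path3 e_simple e_conn n3.
have f1 : f 1 = 1 by rewrite f_gt0 // powR1.
have f2 : 0 < f 2 < 2.
  by rewrite f_gt0 // powR_gt0 //= -[X in _ < X](@powRr1 _ 2) // gt1_ltr_powR ?ltr1n.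
have [A hA nA] := path3_obstruction e_simple eab ebc ac f0 f1 f2.
exact: nA (f_psd A hA).
Qed.

Lemma HG_sub_ge1 : HG e `<=` [set x : R | 1 <= x].
Proof. by move=> alpha h; apply: ge1_of_preserving (epow0 _) (@epow_gt0 _ _) _ => A /h[]. Qed.

Lemma HG_phi_sub_ge1 : HG_phi e `<=` [set x : R | 1 <= x].
Proof.
move=> alpha h; apply: ge1_of_preserving (phi_pow0 _) (@phi_pow_gt0 _ _) _.
by move=> A /PG_nneg_setT /h[].
Qed.

Lemma HG_psi_sub_ge1 : HG_psi e `<=` [set x : R | 1 <= x].
Proof.
move=> alpha h; apply: ge1_of_preserving (psi_pow0 _) (@psi_pow_gt0 _ _) _.
by move=> A /PG_nneg_setT /h[].
Qed.

End Connected.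

Lemma HG_phi_sub_ge2 : subgraph (Kab 2 2) e -> HG_phi e `<=` [set x : R | 2 <= x].
Proof.
move=> hK alpha h; rewrite /= leNgt; apply/negP => a2.
have r1 : 1 < Num.sqrt (2 : R) by rewrite -[X in X < _]sqrtr1 ltr_sqrt ?ltr1n.
have fr : phi_pow alpha (Num.sqrt 2) < 2.
  rewrite phi_pow_gt0 ?(lt_trans ltr01) // -[X in _ < X](sqr_sqrtr (ler0n R 2)).
  by rewrite -powR_mulrn ?sqrtr_ge0 // gt1_ltr_powR.
have f1 : phi_pow alpha 1 = 1 by rewrite phi_pow_gt0 // powR1.
have [A hA nA] := cycle4_obstruction hK (phi_pow0 alpha) f1 (phi_powN1 _) fr.
exact: nA (h A hA).1.
Qed.

End ExponentSets.

Theorem theorem4p10 (R : realType) (n : nat) (e : rel 'I_n) :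
  simple_graph e -> connected_graph e -> bipartite_graph e -> (3 <= n)%N ->
  [/\ HG e = [set x : R | 1 <= x],
      [set x : R | 2 <= x] `<=` HG_phi e /\ HG_phi e `<=` [set x : R | 1 <= x],
      ([set 1] `|` [set x : R | 3 <= x]) `<=` HG_psi e /\
        HG_psi e `<=` [set x : R | 1 <= x]
    & (exists m : nat, (2 <= m)%N /\ subgraph (Kab 2 2) e /\ subgraph e (Kab 2 m)) ->
      HG_phi e = [set x : R | 2 <= x] /\
      ([set 1] `|` [set x : R | 2 <= x]) `<=` HG_psi e /\
      HG_psi e `<=` [set x : R | 1 <= x]].
Proof.
move=> e_simple e_conn [s e_bip] n3.
have psi_1_ge2 : ([set 1] `|` [set x : R | 2 <= x]) `<=` HG_psi e.
  by move=> alpha [->|]; [exact: HG_psi1 | exact: (HG_psi_ge2 e_bip)].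
split.
- by rewrite eqEsubset; split; [exact: HG_sub_ge1 | exact: (HG_ge1 e_bip)].
- by split; [exact: (HG_phi_ge2 e_bip) | exact: HG_phi_sub_ge1].
- split; last exact: HG_psi_sub_ge1.
  by move=> alpha [->|/= a3]; apply: psi_1_ge2; [left | right => /=; lra].
- move=> [m [_ [hK _]]]; split; last by split; [exact: psi_1_ge2 | exact: HG_psi_sub_ge1].
  by rewrite eqEsubset; split; [exact: HG_phi_sub_ge2 | exact: (HG_phi_ge2 e_bip)].
Qed.
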